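(* Let $R$ be a Dedekind ring or a field, let $A$, $B$, $C$ be $R$-Hopf algebras and $f:A\to B$, $g:A\to C$ morphisms of $R$-Hopf algebras. Then the star product $B\star_A C$ has a natural structure of $R$-Hopf algebra, for which the canonical maps $B\to B\star_A C$ and $C\to B\star_A C$ are morphisms of $R$-Hopf algebras.
   Context: Hopf algebras are associative and coassociative, not necessarily commutative. The star product $B\star_A C$ is the quotient of $B\otimes_R C$ by the two-sided ideal generated by $\{f(a)\otimes 1_C-1_B\otimes g(a)\}_{a\in A}$, with canonical maps $b\mapsto$ class of $b\otimes 1$, $c\mapsto$ class of $1\otimes c$. *)

From HB Require Import structures.
From mathcomp Require Import all_boot all_order all_algebra.
Set Implicit Arguments.
Unset Strict Implicit.
Unset Printing Implicit Defensive.
Import GRing.Theory.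
Local Open Scope ring_scope.

Section Dedekind.
Variable R : idomainType.

Definition ring_ideal (I : R -> Prop) : Prop :=
  [/\ I 0, (forall x y, I x -> I y -> I (x + y)) & (forall r x, I x -> I (r * x))].

Definition ideal_fin_gen (I : R -> Prop) : Prop :=
  exists s : seq R, forall x,
    I x <-> exists cs : seq R, x = \sum_(i < size s) cs`_i * s`_i.

Definition noetherian_ring : Prop :=
  forall I, ring_ideal I -> ideal_fin_gen I.

Definition prime_ideal (P : R -> Prop) : Prop :=
  [/\ ring_ideal P, ~ P 1 & forall x y, P (x * y) -> P x \/ P y].

Definition maximal_ideal (M : R -> Prop) : Prop :=
  [/\ ring_ideal M, ~ M 1 &
     forall J, ring_ideal J -> (forall x, M x -> J x) ->
       J 1 \/ (forall x, J x -> M x)].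

Definition integrally_closed : Prop :=
  forall z : {fraction R}, integralOver (@tofrac R) z -> exists r : R, z = tofrac r.

Definition dedekind_ring : Prop :=
  [/\ noetherian_ring, integrally_closed &
      forall P, prime_ideal P -> (exists2 x, P x & x != 0) -> maximal_ideal P].

Definition is_field : Prop := forall x : R, x != 0 -> x \is a GRing.unit.

End Dedekind.

(* An element of M (x)_R N is represented by a finite list             *)
(* [:: (m_1, n_1); ...; (m_k, n_k)] standing for sum_i m_i (x) n_i;    *)
(* two lists represent the same tensor iff every R-bilinear map        *)
(* agrees on them (universal property of the tensor product).          *)
Section Tensor.
Variable R : comRingType.

Definition bilinear_map (M N P : lmodType R) (phi : M -> N -> P) : Prop :=
  (forall (a : R) m m' n, phi (a *: m + m') n = a *: phi m n + phi m' n) /\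
  (forall (a : R) m n n', phi m (a *: n + n') = a *: phi m n + phi m n').

Definition trilinear_map (M N Q P : lmodType R) (phi : M -> N -> Q -> P) : Prop :=
  [/\ (forall (a : R) m m' n q, phi (a *: m + m') n q = a *: phi m n q + phi m' n q),
      (forall (a : R) m n n' q, phi m (a *: n + n') q = a *: phi m n q + phi m n' q) &
      (forall (a : R) m n q q', phi m n (a *: q + q') = a *: phi m n q + phi m n q')].

Definition tensor (M N : lmodType R) := seq (M * N).
Definition tensor3 (M N Q : lmodType R) := seq (M * N * Q).

Definition teq (M N : lmodType R) (s t : tensor M N) : Prop :=
  forall (P : lmodType R) (phi : M -> N -> P), bilinear_map phi ->
    \sum_(x <- s) phi x.1 x.2 = \sum_(x <- t) phi x.1 x.2.

Definition teq3 (M N Q : lmodType R) (s t : tensor3 M N Q) : Prop :=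
  forall (P : lmodType R) (phi : M -> N -> Q -> P), trilinear_map phi ->
    \sum_(x <- s) phi x.1.1 x.1.2 x.2 = \sum_(x <- t) phi x.1.1 x.1.2 x.2.

Definition tscale (M N : lmodType R) (a : R) (s : tensor M N) : tensor M N :=
  [seq (a *: x.1, x.2) | x <- s].

Definition tmap (M N M' N' : lmodType R) (f : M -> M') (g : N -> N')
  (s : tensor M N) : tensor M' N' := [seq (f x.1, g x.2) | x <- s].

Definition tmul (A B : algType R) (s t : tensor A B) : tensor A B :=
  [seq (x.1 * y.1, x.2 * y.2) | x <- s, y <- t].

Definition tone (A B : algType R) : tensor A B := [:: (1, 1)].

(* (Delta (x) id) and (id (x) Delta) applied to an element of H (x) H *)
Definition tcomul_l (H : lmodType R) (D : H -> tensor H H) (s : tensor H H)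
  : tensor3 H H H := flatten [seq [seq (z.1, z.2, y.2) | z <- D y.1] | y <- s].
Definition tcomul_r (H : lmodType R) (D : H -> tensor H H) (s : tensor H H)
  : tensor3 H H H := flatten [seq [seq (y.1, z.1, z.2) | z <- D y.2] | y <- s].

End Tensor.

Section Hopf.
Variable R : comRingType.

Definition hopf_axioms (H : algType R) (comul : H -> tensor H H)
  (counit : H -> R) (antipode : H -> H) : Prop :=
  [/\
   [/\ forall (a : R) x y, teq (comul (a *: x + y)) (tscale a (comul x) ++ comul y),
       forall x, teq3 (tcomul_l comul (comul x)) (tcomul_r comul (comul x)),
       forall x y, teq (comul (x * y)) (tmul (comul x) (comul y)) &
       teq (comul 1) (tone H H)],
   [/\ forall (a : R) x y, counit (a *: x + y) = a * counit x + counit y,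
       forall x y, counit (x * y) = counit x * counit y,
       counit 1 = 1,
       forall x, \sum_(z <- comul x) counit z.1 *: z.2 = x &
       forall x, \sum_(z <- comul x) counit z.2 *: z.1 = x] &
   [/\ forall (a : R) x y, antipode (a *: x + y) = a *: antipode x + antipode y,
       forall x, \sum_(z <- comul x) antipode z.1 * z.2 = (counit x)%:A &
       forall x, \sum_(z <- comul x) z.1 * antipode z.2 = (counit x)%:A]].

Record hopfAlgType := HopfAlg {
  hopf_sort :> algType R;
  comul : hopf_sort -> tensor hopf_sort hopf_sort;
  counit : hopf_sort -> R;
  antipode : hopf_sort -> hopf_sort;
  hopf_axiomsP : hopf_axioms comul counit antipode
}.

(* morphism of R-Hopf algebras (= morphism of R-bialgebras) *)
Definition hopf_morphism (H K : hopfAlgType) (f : H -> K) : Prop :=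
  [/\ forall (a : R) x y, f (a *: x + y) = a *: f x + f y,
      forall x y, f (x * y) = f x * f y,
      f 1 = 1,
      forall x, teq (comul (f x)) (tmap f f (comul x)) &
      forall x, counit (f x) = counit x].

(* The two-sided ideal of B (x)_R C generated by {f a (x) 1 - 1 (x) g a}. *)
Definition star_gen (A B C : hopfAlgType) (f : A -> B) (g : A -> C) (a : A)
  : tensor B C := [:: (f a, 1); (-1, g a)].

Definition in_star_ideal (A B C : hopfAlgType) (f : A -> B) (g : A -> C)
  (s : tensor B C) : Prop :=
  exists l : seq (tensor B C * A * tensor B C),
    teq s (flatten [seq tmul (tmul z.1.1 (star_gen f g z.1.2)) z.2 | z <- l]).

(* P, with maps iB : B -> P and iC : C -> P, is (isomorphic as R-algebra,
   compatibly with the canonical maps, to) the star product B *_A C: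
   the images of iB and iC commute, so that
     pi : B (x) C -> P,  b (x) c |-> iB b * iC c
   is an R-algebra morphism; it is surjective and its kernel is the
   two-sided ideal generated by {f a (x) 1 - 1 (x) g a}.  Then
   iB b = pi (b (x) 1) and iC c = pi (1 (x) c) are the canonical maps. *)
Definition is_star_product (A B C : hopfAlgType) (f : A -> B) (g : A -> C)
  (P : algType R) (iB : B -> P) (iC : C -> P) : Prop :=
  [/\ forall b c, iB b * iC c = iC c * iB b,
      forall p : P, exists s : tensor B C, p = \sum_(x <- s) iB x.1 * iC x.2 &
      forall s : tensor B C,
        \sum_(x <- s) iB x.1 * iC x.2 = 0 <-> in_star_ideal f g s].

End Hopf.

From HB Require Import structures.
From mathcomp Require Import all_boot all_order all_algebra.
From Stdlib Require Import ClassicalEpsilon.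
Set Implicit Arguments.
Unset Strict Implicit.
Unset Printing Implicit Defensive.
Import GRing.Theory.
Local Open Scope ring_scope.

(* Tensors are lists of pairs compared through all bilinear maps, and the star product is
   the quotient of B (x) C by the two-sided ideal I generated by the f a (x) 1 - 1 (x) g a.
   The Hopf structure of B (x) C descends because I is a Hopf ideal: the counit kills the
   generators; the coproduct of a generator vanishes in the quotient, since f and g are
   coalgebra maps and f a (x) 1 = 1 (x) g a there; and the antipode, being
   anti-multiplicative and commuting with f and g, maps generators to generators. *)

Section LinearMaps.
Variable R : comRingType.

Definition linear_map (M N : lmodType R) (h : M -> N) : Prop :=
  forall (a : R) x y, h (a *: x + y) = a *: h x + h y.

Section Linear.
Variables (M N : lmodType R) (h : M -> N).
Hypothesis hlin : linear_map h.

Lemma linear_map0 : h 0 = 0.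
Proof.
have := hlin 1 0 0; rewrite !scale1r addr0 => h0.
by apply: (@addrI _ (h 0)); rewrite addr0 -h0.
Qed.
Lemma linear_mapD x y : h (x + y) = h x + h y.
Proof. by rewrite -[x in LHS]scale1r hlin scale1r. Qed.
Lemma linear_mapZ a x : h (a *: x) = a *: h x.
Proof. by rewrite -[a *: x]addr0 hlin linear_map0 addr0. Qed.
Lemma linear_mapN x : h (- x) = - h x.
Proof. by rewrite -scaleN1r linear_mapZ scaleN1r. Qed.
Lemma linear_map_sum I (r : seq I) (F : I -> M) :
  h (\sum_(i <- r) F i) = \sum_(i <- r) h (F i).
Proof. by elim: r => [|i r IH]; rewrite ?big_nil ?linear_map0 // !big_cons linear_mapD IH. Qed.

End Linear.

Section Bilinear.
Variables (M N P : lmodType R) (phi : M -> N -> P).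
Hypothesis hphi : bilinear_map phi.

Lemma bilinear_map_l n : linear_map (phi^~ n).
Proof. by case: hphi => h _ a m m'; apply: h. Qed.
Lemma bilinear_map_r m : linear_map (phi m).
Proof. by case: hphi => _ h a n n'; apply: h. Qed.

Lemma bilinDl m m' n : phi (m + m') n = phi m n + phi m' n.
Proof. exact: (linear_mapD (bilinear_map_l n)). Qed.
Lemma bilinDr m n n' : phi m (n + n') = phi m n + phi m n'.
Proof. exact: (linear_mapD (bilinear_map_r m)). Qed.
Lemma bilinZl a m n : phi (a *: m) n = a *: phi m n.
Proof. exact: (linear_mapZ (bilinear_map_l n)). Qed.
Lemma bilinZr a m n : phi m (a *: n) = a *: phi m n.
Proof. exact: (linear_mapZ (bilinear_map_r m)). Qed.
Lemma bilinNl m n : phi (- m) n = - phi m n.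
Proof. exact: (linear_mapN (bilinear_map_l n)). Qed.

Definition bilinE := (bilinDl, bilinZl, bilinDr, bilinZr).

End Bilinear.

Section Trilinear.
Variables (M N Q P : lmodType R) (phi : M -> N -> Q -> P).
Hypothesis hphi : trilinear_map phi.

Lemma trilinear_map12 q : bilinear_map (fun m n => phi m n q).
Proof. by case: hphi => h1 h2 _; split=> *; rewrite ?h1 ?h2. Qed.
Lemma trilinear_map23 m : bilinear_map (phi m).
Proof. by case: hphi => _ h2 h3; split=> *; rewrite ?h2 ?h3. Qed.

End Trilinear.
End LinearMaps.

Section TensorRepresentatives.
Variable R : comRingType.

Definition tsum (M N P : lmodType R) (phi : M -> N -> P) (s : tensor M N) : P :=
  \sum_(x <- s) phi x.1 x.2.

Section Tsum.
Variables M N P : lmodType R.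
Implicit Types (phi F G K : M -> N -> P) (s t : tensor M N).

Lemma tsum_nil phi : tsum phi [::] = 0.
Proof. by rewrite /tsum big_nil. Qed.
Lemma tsum_cons phi x s : tsum phi (x :: s) = phi x.1 x.2 + tsum phi s.
Proof. by rewrite /tsum big_cons. Qed.
Lemma tsum_cat phi s t : tsum phi (s ++ t) = tsum phi s + tsum phi t.
Proof. by rewrite /tsum big_cat. Qed.
Lemma tsum_tscale phi a s : bilinear_map phi -> tsum phi (tscale a s) = a *: tsum phi s.
Proof.
move=> hphi; rewrite /tsum /tscale big_map scaler_sumr.
by apply: eq_bigr => x _; rewrite bilinZl.
Qed.

Lemma eq_tsum F G s : (forall a b, F a b = G a b) -> tsum F s = tsum G s.
Proof. by move=> eFG; apply: eq_bigr => x _; rewrite eFG. Qed.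
Lemma scaler_tsum c F s : c *: tsum F s = tsum (fun a b => c *: F a b) s.
Proof. by rewrite /tsum scaler_sumr. Qed.
Lemma tsumD F G s : tsum F s + tsum G s = tsum (fun a b => F a b + G a b) s.
Proof. by rewrite /tsum -big_split. Qed.
Lemma tsum_linear F G K c s :
  (forall a b, F a b = c *: G a b + K a b) -> tsum F s = c *: tsum G s + tsum K s.
Proof. by move=> eF; rewrite scaler_tsum tsumD; apply: eq_tsum. Qed.

End Tsum.

Section TensorEquality.
Variables M N : lmodType R.
Implicit Types s t u : tensor M N.

Lemma teq_tsumP s t :
  teq s t <-> forall (Q : lmodType R) (phi : M -> N -> Q),
                bilinear_map phi -> tsum phi s = tsum phi t.
Proof. by []. Qed.

Lemma teq_refl s : teq s s. Proof. by []. Qed.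
Lemma teq_sym s t : teq s t -> teq t s.
Proof. by move=> est Q phi hphi; rewrite est. Qed.
Lemma teq_trans s t u : teq s t -> teq t u -> teq s u.
Proof. by move=> est etu Q phi hphi; rewrite est // etu. Qed.
Lemma teq_cat s s' t t' : teq s s' -> teq t t' -> teq (s ++ t) (s' ++ t').
Proof. by move=> es et Q phi hphi; rewrite !big_cat /= es // et. Qed.
Lemma teq_catC s t : teq (s ++ t) (t ++ s).
Proof. by apply/teq_tsumP => Q phi _; rewrite !tsum_cat addrC. Qed.
Lemma teq_tscale a s s' : teq s s' -> teq (tscale a s) (tscale a s').
Proof. by move=> /teq_tsumP es; apply/teq_tsumP => Q phi hphi; rewrite !tsum_tscale // es. Qed.

Lemma tscale_cat a s t : tscale a (s ++ t) = tscale a s ++ tscale a t.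
Proof. by rewrite /tscale map_cat. Qed.
Lemma tscaleA a b s : teq (tscale a (tscale b s)) (tscale (a * b) s).
Proof. by apply/teq_tsumP => Q phi hphi; rewrite !tsum_tscale // scalerA. Qed.
Lemma tscale1 s : teq (tscale 1 s) s.
Proof. by apply/teq_tsumP => Q phi hphi; rewrite tsum_tscale // scale1r. Qed.
Lemma tscaleDl a b s : teq (tscale (a + b) s) (tscale a s ++ tscale b s).
Proof. by apply/teq_tsumP => Q phi hphi; rewrite tsum_cat !tsum_tscale // scalerDl. Qed.
Lemma teq_subrr s : teq (s ++ tscale (-1) s) [::].
Proof.
by apply/teq_tsumP => Q phi hphi; rewrite tsum_cat tsum_tscale // scaleN1r subrr tsum_nil.
Qed.

End TensorEquality.

Lemma exchange_tsum (M N M' N' P : lmodType R) (F : M -> N -> M' -> N' -> P) s t :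
  tsum (fun a b => tsum (F a b) t) s = tsum (fun c d => tsum (fun a b => F a b c d) s) t.
Proof. exact: exchange_big. Qed.

Lemma tsum_tmap (M N M' N' P : lmodType R) (f : M -> M') (g : N -> N')
    (phi : M' -> N' -> P) s :
  tsum phi (tmap f g s) = tsum (fun m n => phi (f m) (g n)) s.
Proof. by rewrite /tsum /tmap big_map. Qed.

Lemma sum_tcomul_l (M P : lmodType R) (D : M -> tensor M M) (phi : M -> M -> M -> P) s :
  \sum_(x <- tcomul_l D s) phi x.1.1 x.1.2 x.2 =
  tsum (fun y1 y2 => tsum (fun z1 z2 => phi z1 z2 y2) (D y1)) s.
Proof.
by rewrite /tcomul_l big_flatten /= big_map; apply: eq_bigr => y _; rewrite big_map.
Qed.
Lemma sum_tcomul_r (M P : lmodType R) (D : M -> tensor M M) (phi : M -> M -> M -> P) s :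
  \sum_(x <- tcomul_r D s) phi x.1.1 x.1.2 x.2 =
  tsum (fun y1 y2 => tsum (fun z1 z2 => phi y1 z1 z2) (D y2)) s.
Proof.
by rewrite /tcomul_r big_flatten /= big_map; apply: eq_bigr => y _; rewrite big_map.
Qed.

Section MulTsum.
Variables (M N : lmodType R) (P : algType R).
Implicit Types (F : M -> N -> P) (s : tensor M N).

Lemma mulr_tsumr F (x : P) s : x * tsum F s = tsum (fun a b => x * F a b) s.
Proof. by rewrite /tsum mulr_sumr. Qed.
Lemma mulr_tsuml F (x : P) s : tsum F s * x = tsum (fun a b => F a b * x) s.
Proof. by rewrite /tsum mulr_suml. Qed.
End MulTsum.

Lemma tsum_tmul (A B : algType R) (P : lmodType R) (phi : A -> B -> P) s t :
  tsum phi (tmul s t) = tsum (fun a b => tsum (fun c d => phi (a * c) (b * d)) t) s.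
Proof. by rewrite /tsum /tmul big_allpairs_dep. Qed.

Section TensorAlgebraLaws.
Variables A B : algType R.
Implicit Types s t u : tensor A B.

Lemma teq_tmul s s' t t' : teq s s' -> teq t t' -> teq (tmul s t) (tmul s' t').
Proof.
move=> /teq_tsumP es /teq_tsumP et; apply/teq_tsumP => P phi hphi; rewrite !tsum_tmul.
have hl : bilinear_map (fun a b => tsum (fun c d => phi (a * c) (b * d)) t).
  by split=> c m m' n; apply: tsum_linear => a b;
    rewrite ?mulrDl -?scalerAl ?(bilinE hphi).
have hr : bilinear_map (fun c d => tsum (fun a b => phi (a * c) (b * d)) s').
  by split=> c m m' n; apply: tsum_linear => a b;
    rewrite ?mulrDr -?scalerAr ?(bilinE hphi).
by rewrite (es _ _ hl) [LHS]exchange_tsum (et _ _ hr) exchange_tsum.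
Qed.

Lemma tmul_catl s t u : teq (tmul (s ++ t) u) (tmul s u ++ tmul t u).
Proof. by apply/teq_tsumP => P phi _; rewrite [RHS]tsum_cat !tsum_tmul tsum_cat. Qed.
Lemma tmul_catr s t u : teq (tmul u (s ++ t)) (tmul u s ++ tmul u t).
Proof.
apply/teq_tsumP => P phi _; rewrite [RHS]tsum_cat !tsum_tmul tsumD.
by apply: eq_tsum => a b; rewrite tsum_cat.
Qed.
Lemma tmul_tscalel a s u : teq (tmul (tscale a s) u) (tscale a (tmul s u)).
Proof.
apply/teq_tsumP => P phi hphi; rewrite tsum_tscale // !tsum_tmul /tsum /tscale big_map.
rewrite scaler_sumr; apply: eq_bigr => x _; rewrite scaler_sumr; apply: eq_bigr => y _ /=.
by rewrite -scalerAl bilinZl.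
Qed.
Lemma tmul_tscaler a s u : teq (tmul u (tscale a s)) (tscale a (tmul u s)).
Proof.
apply/teq_tsumP => P phi hphi; rewrite tsum_tscale // !tsum_tmul scaler_tsum.
apply: eq_tsum => b c; rewrite /tsum /tscale big_map scaler_sumr; apply: eq_bigr => y _ /=.
by rewrite -scalerAr bilinZl.
Qed.
Lemma tmulA s t u : teq (tmul s (tmul t u)) (tmul (tmul s t) u).
Proof.
apply/teq_tsumP => P phi _; rewrite !tsum_tmul; apply: eq_tsum => a b.
by rewrite tsum_tmul; apply: eq_tsum => c d; apply: eq_tsum => e h; rewrite !mulrA.
Qed.
Lemma tmul_nilr s : teq (tmul s [::]) [::].
Proof.
by apply/teq_tsumP => P phi _; rewrite tsum_tmul tsum_nil /tsum big1 // => x; rewrite big_nil.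
Qed.
Lemma tmul1l s : teq (tmul (tone A B) s) s.
Proof.
apply/teq_tsumP => P phi _; rewrite tsum_tmul tsum_cons tsum_nil addr0.
by apply: eq_tsum => b c; rewrite !mul1r.
Qed.
Lemma tmul1r s : teq (tmul s (tone A B)) s.
Proof.
apply/teq_tsumP => P phi _; rewrite tsum_tmul.
by apply: eq_tsum => b c; rewrite tsum_cons tsum_nil addr0 /= !mulr1.
Qed.

End TensorAlgebraLaws.
End TensorRepresentatives.

Section HopfAlgebraAxioms.
Variables (R : comRingType) (H : hopfAlgType R).
Implicit Types x y : H.

Lemma comul_linear (M : lmodType R) (F : H -> H -> M) a x y : bilinear_map F ->
  tsum F (comul (a *: x + y)) = a *: tsum F (comul x) + tsum F (comul y).
Proof.
move=> hF; case: (hopf_axiomsP H) => [[hl _ _ _] _ _].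
by have /teq_tsumP -> := hl a x y; rewrite // tsum_cat tsum_tscale.
Qed.

Lemma comul_coassoc (M : lmodType R) (F : H -> H -> H -> M) x : trilinear_map F ->
  tsum (fun a b => tsum (fun c d => F c d b) (comul a)) (comul x) =
  tsum (fun a b => tsum (fun c d => F a c d) (comul b)) (comul x).
Proof.
move=> hF; case: (hopf_axiomsP H) => [[_ hc _ _] _ _].
by have := hc x _ _ hF; rewrite sum_tcomul_l sum_tcomul_r.
Qed.

Lemma comulM (M : lmodType R) (F : H -> H -> M) x y : bilinear_map F ->
  tsum F (comul (x * y)) =
  tsum (fun a b => tsum (fun c d => F (a * c) (b * d)) (comul y)) (comul x).
Proof.
move=> hF; case: (hopf_axiomsP H) => [[_ _ hm _] _ _].
by have /teq_tsumP -> := hm x y; rewrite // tsum_tmul.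
Qed.

Lemma comul1 (M : lmodType R) (F : H -> H -> M) : bilinear_map F ->
  tsum F (comul (1 : H)) = F 1 1.
Proof.
move=> hF; case: (hopf_axiomsP H) => [[_ _ _ h1] _ _].
by have /teq_tsumP -> := h1; rewrite // tsum_cons tsum_nil addr0.
Qed.

Lemma counit_linear : linear_map (@counit R H : H -> R^o).
Proof. by case: (hopf_axiomsP H) => [_ [h _ _ _ _] _]. Qed.
Lemma counitM x y : counit (x * y) = counit x * counit y.
Proof. by case: (hopf_axiomsP H) => [_ [_ h _ _ _] _]; apply: h. Qed.
Lemma counit1 : counit (1 : H) = 1.
Proof. by case: (hopf_axiomsP H) => [_ [_ _ h _ _] _]. Qed.
Lemma counitD x y : counit (x + y) = counit x + counit y.
Proof. exact: (linear_mapD counit_linear). Qed.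
Lemma counitZ a x : counit (a *: x) = a * counit x.
Proof. exact: (linear_mapZ counit_linear). Qed.
Lemma counitN1 : counit (-1 : H) = -1.
Proof. by rewrite -scaleN1r counitZ counit1 mulr1. Qed.

Lemma antipode_linear : linear_map (@antipode R H).
Proof. by case: (hopf_axiomsP H) => [_ _ [h _ _]]. Qed.
Lemma antipode_l x : tsum (fun a b => antipode a * b) (comul x) = (counit x)%:A.
Proof. by case: (hopf_axiomsP H) => [_ _ [_ h _]]; apply: h. Qed.
Lemma antipode_r x : tsum (fun a b => a * antipode b) (comul x) = (counit x)%:A.
Proof. by case: (hopf_axiomsP H) => [_ _ [_ _ h]]; apply: h. Qed.
Lemma antipodeD x y : antipode (x + y) = antipode x + antipode y.
Proof. exact: (linear_mapD antipode_linear). Qed.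
Lemma antipodeZ a x : antipode (a *: x) = a *: antipode x.
Proof. exact: (linear_mapZ antipode_linear). Qed.

Lemma counit_l_map (M : lmodType R) (G : H -> M) : linear_map G -> forall x,
  tsum (fun a b => counit a *: G b) (comul x) = G x.
Proof.
move=> hG x; case: (hopf_axiomsP H) => [_ [_ _ _ hl _] _].
rewrite -[in RHS](hl x) /tsum (linear_map_sum hG).
by apply: eq_bigr => z _; rewrite linear_mapZ.
Qed.
Lemma counit_r_map (M : lmodType R) (G : H -> M) : linear_map G -> forall x,
  tsum (fun a b => counit b *: G a) (comul x) = G x.
Proof.
move=> hG x; case: (hopf_axiomsP H) => [_ [_ _ _ _ hr] _].
rewrite -[in RHS](hr x) /tsum (linear_map_sum hG).
by apply: eq_bigr => z _; rewrite linear_mapZ.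
Qed.

End HopfAlgebraAxioms.

Ltac linear_normalize :=
  rewrite ?antipodeD ?antipodeZ ?mulrDl ?mulrDr -?scalerAl -?scalerAr.
Ltac multilinear_with t :=
  split; intros; repeat (apply: tsum_linear => ? ?);
  repeat progress (linear_normalize; try t).
Ltac multilinear := multilinear_with idtac.

Section AntipodeAntiMultiplicative.
Variables (R : comRingType) (H : hopfAlgType R).
Implicit Types x y : H.

Lemma antipode1 : antipode (1 : H) = 1.
Proof.
have := antipode_l (1 : H); rewrite comul1; last by multilinear.
by rewrite mulr1 counit1 scale1r.
Qed.
Lemma antipodeN1 : antipode (-1 : H) = -1.
Proof. by rewrite -scaleN1r antipodeZ antipode1 scaleN1r. Qed.

Section Twist.
Variables x y : H.
Local Notation S := (@antipode R H).

(* In Sweedler notation, sum S(x1 y1) x2 y2 S(y3) S(x3): contracting y2 S(y3) and then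
   x2 S(x3) leaves S(x y), while contracting S(x1 y1) x2 y2 leaves S(y) S(x). *)
Definition antipode_twist :=
  tsum (fun x1 x2 => tsum (fun y1 y2 => tsum (fun u v =>
    tsum (fun p q => S (x1 * y1) * (u * p) * S q * S v) (comul y2)) (comul x2))
    (comul y)) (comul x).

Lemma antipode_twist_antipode_mul : antipode_twist = S (x * y).
Proof.
rewrite /antipode_twist.
transitivity (tsum (fun x1 x2 => tsum (fun u v => tsum (fun y1 y2 =>
    counit y2 *: (S (x1 * y1) * u * S v)) (comul y)) (comul x2)) (comul x)).
  apply: eq_tsum => x1 x2; rewrite [LHS]exchange_tsum; apply: eq_tsum => u v.
  apply: eq_tsum => y1 y2.
  transitivity (S (x1 * y1) * u * tsum (fun p q => p * S q) (comul y2) * S v).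
    by rewrite mulr_tsumr mulr_tsuml; apply: eq_tsum => p q; rewrite !mulrA.
  by rewrite antipode_r mulr_algr -scalerAl.
transitivity (tsum (fun x1 x2 => tsum (fun u v => S (x1 * y) * (u * S v))
    (comul x2)) (comul x)).
  apply: eq_tsum => x1 x2; apply: eq_tsum => u v.
  rewrite (counit_r_map (G := fun a => S (x1 * a) * u * S v)) ?mulrA //.
  by move=> c a a'; rewrite mulrDr -scalerAr antipodeD
    antipodeZ mulrDl mulrDl -!scalerAl.
transitivity (tsum (fun x1 x2 => counit x2 *: S (x1 * y)) (comul x)).
  by apply: eq_tsum => x1 x2; rewrite -mulr_tsumr antipode_r mulr_algr.
apply: counit_r_map => c a a'.
by rewrite mulrDl -scalerAl antipodeD antipodeZ.
Qed.

Lemma antipode_twist_mul_antipode : antipode_twist = S y * S x.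
Proof.
rewrite /antipode_twist.
transitivity (tsum (fun x1 x2 => tsum (fun u v => tsum (fun y1 y2 =>
    tsum (fun p q => S (x1 * y1) * (u * p) * S q * S v) (comul y2)) (comul y))
    (comul x2)) (comul x)).
  by apply: eq_tsum => x1 x2; rewrite [LHS]exchange_tsum.
rewrite -(comul_coassoc (F := fun x1 u v => tsum (fun y1 y2 =>
    tsum (fun p q => S (x1 * y1) * (u * p) * S q * S v) (comul y2)) (comul y)));
  last by multilinear.
transitivity (tsum (fun a b => tsum (fun c d => tsum (fun a' q =>
    tsum (fun y1 p => S (c * y1) * (d * p) * S q * S b) (comul a')) (comul y))
    (comul a)) (comul x)).
  apply: eq_tsum => a b; apply: eq_tsum => c d.
  rewrite -(comul_coassoc (F := fun y1 p q => S (c * y1) * (d * p) * S q * S b)) //.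
  by multilinear.
transitivity (tsum (fun a b => tsum (fun a' q =>
    (counit a * counit a') *: (S q * S b)) (comul y)) (comul x)).
  apply: eq_tsum => a b; rewrite [LHS]exchange_tsum; apply: eq_tsum => a' q.
  rewrite -counitM -mulr_algl -antipode_l mulr_tsuml comulM;
    last by multilinear.
  by apply: eq_tsum => c d; apply: eq_tsum => y1 p; rewrite !mulrA.
transitivity (tsum (fun a b => counit a *: (S y * S b)) (comul x)).
  apply: eq_tsum => a b; rewrite -(counit_l_map (G := fun q => S q * S b) _ y);
    last by move=> c u u'; rewrite antipodeD antipodeZ mulrDl -scalerAl.
  by rewrite scaler_tsum; apply: eq_tsum => a' q; rewrite scalerA.
apply: counit_l_map => c u u'.
by rewrite antipodeD antipodeZ mulrDr -scalerAr.
Qed.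

End Twist.

Lemma antipodeM x y : antipode (x * y) = antipode y * antipode x.
Proof. by rewrite -antipode_twist_antipode_mul antipode_twist_mul_antipode. Qed.

End AntipodeAntiMultiplicative.

Section HopfMorphismTheory.
Variables (R : comRingType) (A B : hopfAlgType R) (f : A -> B).
Hypothesis hf : hopf_morphism f.

Lemma morph_linear : linear_map f.
Proof. by case: hf. Qed.
Lemma morphD x y : f (x + y) = f x + f y.
Proof. exact: (linear_mapD morph_linear). Qed.
Lemma morphZ a x : f (a *: x) = a *: f x.
Proof. exact: (linear_mapZ morph_linear). Qed.
Lemma morphM x y : f (x * y) = f x * f y.
Proof. by case: hf => _ h _ _ _; apply: h. Qed.
Lemma morph1 : f 1 = 1.
Proof. by case: hf. Qed.
Lemma counit_morph x : counit (f x) = counit x.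
Proof. by case: hf => _ _ _ _ h; apply: h. Qed.
Lemma comul_morph (M : lmodType R) (phi : B -> B -> M) x : bilinear_map phi ->
  tsum phi (comul (f x)) = tsum (fun a b => phi (f a) (f b)) (comul x).
Proof.
move=> hphi; case: hf => _ _ _ h _.
by have /teq_tsumP -> := h x; rewrite // tsum_tmap.
Qed.

Lemma morph_antipode x : f (antipode x) = antipode (f x).
Proof.
pose E := tsum (fun a1 a2 => tsum (fun u v =>
  f (antipode a1) * f u * antipode (f v)) (comul a2)) (comul x).
have E_f : E = f (antipode x).
  transitivity (tsum (fun a1 a2 => counit a2 *: f (antipode a1)) (comul x)).
    apply: eq_tsum => a1 a2.
    rewrite -counit_morph -mulr_algr -antipode_r comul_morph; last by multilinear.
    by rewrite mulr_tsumr; apply: eq_tsum => u v; rewrite mulrA.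
  by apply: counit_r_map => c u u'; rewrite antipodeD antipodeZ morphD morphZ.
have E_S : E = antipode (f x).
  rewrite /E -(comul_coassoc (F := fun a1 u v => f (antipode a1) * f u * antipode (f v)));
    last by multilinear_with ltac:(rewrite ?morphD ?morphZ).
  transitivity (tsum (fun a v => counit a *: antipode (f v)) (comul x)).
    apply: eq_tsum => a v.
    rewrite -mulr_algl -morph1 -morphZ -antipode_l.
    rewrite /tsum (linear_map_sum morph_linear) mulr_suml.
    by apply: eq_bigr => z _; rewrite morphM.
  by apply: counit_l_map => c u u'; rewrite morphD morphZ antipodeD antipodeZ.
by rewrite -E_f E_S.
Qed.

End HopfMorphismTheory.

Section StarIdeal.
Variables (R : comRingType) (A B C : hopfAlgType R) (f : A -> B) (g : A -> C).
Local Notation I := (in_star_ideal f g).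
Implicit Types s t u : tensor B C.

Definition star_ideal_comb (l : seq (tensor B C * A * tensor B C)) : tensor B C :=
  flatten [seq tmul (tmul z.1.1 (star_gen f g z.1.2)) z.2 | z <- l].

Lemma star_ideal_comb_cons z l :
  star_ideal_comb (z :: l) =
  tmul (tmul z.1.1 (star_gen f g z.1.2)) z.2 ++ star_ideal_comb l.
Proof. by []. Qed.

Lemma star_ideal_teq s t : teq s t -> I t -> I s.
Proof. by move=> est [l etl]; exists l; apply: teq_trans est etl. Qed.
Lemma star_ideal_nil : I [::].
Proof. by exists [::]. Qed.
Lemma star_ideal_cat s t : I s -> I t -> I (s ++ t).
Proof.
move=> [l1 e1] [l2 e2]; exists (l1 ++ l2).
by rewrite map_cat flatten_cat; apply: teq_cat.
Qed.
Lemma star_ideal_tscale a s : I s -> I (tscale a s).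
Proof.
move=> [l e]; exists [seq (tscale a z.1.1, z.1.2, z.2) | z <- l].
apply: teq_trans (teq_tscale a e) _; rewrite -!/(star_ideal_comb _).
elim: l {e} => [|z l IH] //; rewrite !star_ideal_comb_cons tscale_cat.
apply: teq_cat => //; apply: teq_trans (teq_sym (tmul_tscalel _ _ _)) _.
exact: teq_tmul (teq_sym (tmul_tscalel _ _ _)) (teq_refl _).
Qed.
Lemma star_ideal_mull u s : I s -> I (tmul u s).
Proof.
move=> [l e]; exists [seq (tmul u z.1.1, z.1.2, z.2) | z <- l].
apply: teq_trans (teq_tmul (teq_refl u) e) _; rewrite -!/(star_ideal_comb _).
elim: l {e} => [|z l IH] /=; first exact: tmul_nilr.
rewrite !star_ideal_comb_cons; apply: teq_trans (tmul_catr _ _ _) _.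
apply: teq_cat => //; apply: teq_trans (tmulA _ _ _) _.
exact: teq_tmul (tmulA _ _ _) (teq_refl _).
Qed.
Lemma star_ideal_mulr u s : I s -> I (tmul s u).
Proof.
move=> [l e]; exists [seq (z.1.1, z.1.2, tmul z.2 u) | z <- l].
apply: teq_trans (teq_tmul e (teq_refl u)) _; rewrite -!/(star_ideal_comb _).
elim: l {e} => [|z l IH] //; rewrite !star_ideal_comb_cons.
by apply: teq_trans (tmul_catl _ _ _) _; apply: teq_cat => //; apply: teq_sym; apply: tmulA.
Qed.

Definition star_equiv s t : Prop := I (s ++ tscale (-1) t).

Lemma teq_star_equiv s t : teq s t -> star_equiv s t.
Proof.
move=> est; apply: star_ideal_teq star_ideal_nil.
exact: teq_trans (teq_cat est (teq_refl _)) (teq_subrr _).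
Qed.
Lemma star_equiv_sym s t : star_equiv s t -> star_equiv t s.
Proof.
move=> /(star_ideal_tscale (-1)); apply: star_ideal_teq; apply/teq_tsumP => P phi hphi.
by rewrite tsum_tscale // !tsum_cat !tsum_tscale // !scaleN1r opprD opprK addrC.
Qed.
Lemma star_equiv_trans s t u : star_equiv s t -> star_equiv t u -> star_equiv s u.
Proof.
move=> est etu; apply: star_ideal_teq (star_ideal_cat est etu).
apply/teq_tsumP => P phi hphi.
by rewrite !tsum_cat !tsum_tscale // !scaleN1r addrA addrNK.
Qed.
Lemma star_equiv_cat s s' t t' :
  star_equiv s s' -> star_equiv t t' -> star_equiv (s ++ t) (s' ++ t').
Proof.
move=> es et; apply: star_ideal_teq (star_ideal_cat es et).
apply/teq_tsumP => P phi hphi; rewrite !tsum_cat !tsum_tscale // !tsum_cat !scaleN1r.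
by rewrite opprD !addrA; congr (_ + _); rewrite -!addrA; congr (_ + _); rewrite addrC.
Qed.
Lemma star_equiv_tscale a s s' : star_equiv s s' -> star_equiv (tscale a s) (tscale a s').
Proof.
move=> /(star_ideal_tscale a); apply: star_ideal_teq; apply/teq_tsumP => P phi hphi.
by rewrite !tsum_cat !tsum_tscale // !tsum_cat !tsum_tscale // !scaleN1r scalerDr scalerN.
Qed.
Lemma star_equiv_tmul s s' t t' :
  star_equiv s s' -> star_equiv t t' -> star_equiv (tmul s t) (tmul s' t').
Proof.
move=> es et; apply: star_ideal_teq (star_ideal_cat (star_ideal_mulr t es)
  (star_ideal_mull s' et)).
apply: teq_sym; apply: teq_trans (teq_cat (tmul_catl _ _ _) (tmul_catr _ _ _)) _.
apply: teq_trans (teq_cat (teq_cat (teq_refl _) (tmul_tscalel _ _ _))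
   (teq_cat (teq_refl _) (tmul_tscaler _ _ _))) _.
apply/teq_tsumP => P phi hphi.
by rewrite !tsum_cat !tsum_tscale // !scaleN1r addrA addrNK.
Qed.

End StarIdeal.

Definition asbool (P : Prop) : bool := if excluded_middle_informative P then true else false.
Lemma asboolP (P : Prop) : reflect P (asbool P).
Proof. by rewrite /asbool; case: excluded_middle_informative => h; constructor. Qed.

Local Open Scope quotient_scope.

Section StarProduct.
Variables (R : comRingType) (A B C : hopfAlgType R) (f : A -> B) (g : A -> C).
Hypotheses (hf : hopf_morphism f) (hg : hopf_morphism g).
Local Notation I := (in_star_ideal f g).
Local Notation T := (tensor B C).
Implicit Types s t u : T.

(* Quotient types need a boolean relation: [star_equiv] is decided classically. *)
Definition star_rel s t : bool := asbool (star_equiv f g s t).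

Lemma star_rel_refl : reflexive star_rel.
Proof. by move=> s; apply/asboolP; apply: teq_star_equiv. Qed.
Lemma star_rel_sym : symmetric star_rel.
Proof. by move=> s t; apply/asboolP/asboolP; apply: star_equiv_sym. Qed.
Lemma star_rel_trans : transitive star_rel.
Proof.
by move=> t s u /asboolP est /asboolP etu; apply/asboolP; apply: star_equiv_trans est etu.
Qed.

Canonical star_rel_equiv := EquivRel star_rel star_rel_refl star_rel_sym star_rel_trans.
Definition star_product := {eq_quot star_rel}.
HB.instance Definition _ : EqQuotient _ star_rel star_product := EqQuotient.on star_product.
HB.instance Definition _ := Choice.on star_product.

Local Notation pi := \pi_star_product.

Lemma pi_equiv s t : star_equiv f g s t -> pi s = pi t.
Proof. by move=> est; apply/eqmodP/asboolP. Qed.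
Lemma equiv_pi s t : pi s = pi t -> star_equiv f g s t.
Proof. by move/eqmodP/asboolP. Qed.
Lemma pi_teq s t : teq s t -> pi s = pi t.
Proof. by move=> est; apply: pi_equiv; apply: teq_star_equiv. Qed.
Lemma repr_equiv s : star_equiv f g (repr (pi s)) s.
Proof. by apply: equiv_pi; rewrite reprK. Qed.

Fact star_key : unit. Proof. by []. Qed.
Definition star_add : star_product -> star_product -> star_product :=
  locked_with star_key (fun x y => pi (repr x ++ repr y)).
Definition star_scale : R -> star_product -> star_product :=
  locked_with star_key (fun a x => pi (tscale a (repr x))).
Definition star_mul : star_product -> star_product -> star_product :=
  locked_with star_key (fun x y => pi (tmul (repr x) (repr y))).

Lemma star_addE s t : star_add (pi s) (pi t) = pi (s ++ t).
Proof. by rewrite [star_add]unlock; apply/pi_equiv/star_equiv_cat; apply: repr_equiv. Qed.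
Lemma star_scaleE a s : star_scale a (pi s) = pi (tscale a s).
Proof. by rewrite [star_scale]unlock; apply/pi_equiv/star_equiv_tscale/repr_equiv. Qed.
Lemma star_mulE s t : star_mul (pi s) (pi t) = pi (tmul s t).
Proof. by rewrite [star_mul]unlock; apply/pi_equiv/star_equiv_tmul; apply: repr_equiv. Qed.

Lemma star_addA : associative star_add.
Proof.
move=> x y z; elim/quotW: x => s; elim/quotW: y => t; elim/quotW: z => u.
by rewrite !star_addE catA.
Qed.
Lemma star_addC : commutative star_add.
Proof.
move=> x y; elim/quotW: x => s; elim/quotW: y => t.
by rewrite !star_addE; apply: pi_teq; apply: teq_catC.
Qed.
Lemma star_add0 : left_id (pi [::]) star_add.
Proof. by move=> x; elim/quotW: x => s; rewrite star_addE. Qed.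
Lemma star_addN : left_inverse (pi [::]) (star_scale (-1)) star_add.
Proof.
move=> x; elim/quotW: x => s; rewrite star_scaleE star_addE; apply: pi_teq.
exact: teq_trans (teq_catC _ _) (teq_subrr _).
Qed.
HB.instance Definition _ :=
  GRing.isZmodule.Build star_product star_addA star_addC star_add0 star_addN.

Lemma star_scaleA a b x : star_scale a (star_scale b x) = star_scale (a * b) x.
Proof. by elim/quotW: x => s; rewrite !star_scaleE; apply: pi_teq; apply: tscaleA. Qed.
Lemma star_scale1 : left_id 1 star_scale.
Proof. by move=> x; elim/quotW: x => s; rewrite star_scaleE; apply/pi_teq/tscale1. Qed.
Lemma star_scaleDr : right_distributive star_scale +%R.
Proof.
move=> a x y; elim/quotW: x => s; elim/quotW: y => t.
by rewrite /GRing.add /= !star_addE !star_scaleE star_addE tscale_cat.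
Qed.
Lemma star_scaleDl x : {morph star_scale^~ x : a b / a + b}.
Proof.
move=> a b; elim/quotW: x => s; rewrite /GRing.add /= !star_scaleE star_addE.
by apply: pi_teq; apply: tscaleDl.
Qed.
HB.instance Definition _ := GRing.Zmodule_isLmodule.Build R star_product
  star_scaleA star_scale1 star_scaleDr star_scaleDl.

Lemma add_pi s t : pi s + pi t = pi (s ++ t).
Proof. exact: star_addE. Qed.
Lemma scale_pi a s : a *: pi s = pi (tscale a s).
Proof. exact: star_scaleE. Qed.

Definition counit_rep s : R :=
  tsum (fun (b : B) (c : C) => counit b * counit c : R^o) s.

Lemma counit_rep_bilinear :
  bilinear_map (fun (b : B) (c : C) => counit b * counit c : R^o).
Proof.
split=> a m m' n /=; rewrite ?counitD ?counitZ.
  by rewrite mulrDl -mulrA.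
by rewrite mulrDr mulrCA.
Qed.
Lemma counit_rep_teq s t : teq s t -> counit_rep s = counit_rep t.
Proof. by move=> /teq_tsumP est; apply: (est _ _ counit_rep_bilinear). Qed.
Lemma counit_rep_cat s t : counit_rep (s ++ t) = counit_rep s + counit_rep t.
Proof. by rewrite /counit_rep tsum_cat. Qed.
Lemma counit_rep_tscale a s : counit_rep (tscale a s) = a * counit_rep s.
Proof. by rewrite /counit_rep (tsum_tscale _ _ counit_rep_bilinear). Qed.
Lemma counit_rep_tmul s t : counit_rep (tmul s t) = counit_rep s * counit_rep t.
Proof.
rewrite /counit_rep tsum_tmul /tsum mulr_suml; apply: eq_bigr => x _.
by rewrite mulr_sumr; apply: eq_bigr => y _; rewrite !counitM mulrACA.
Qed.
Lemma counit_rep_pure b c : counit_rep [:: (b, c)] = counit b * counit c.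
Proof. by rewrite /counit_rep tsum_cons tsum_nil addr0. Qed.

Lemma counit_rep_star_gen a : counit_rep (star_gen f g a) = 0.
Proof.
rewrite /counit_rep tsum_cons tsum_cons tsum_nil /= !counit1 counitN1.
by rewrite (counit_morph hf) (counit_morph hg) mulr1 mulN1r addr0 subrr.
Qed.
Lemma counit_rep_star_ideal s : I s -> counit_rep s = 0.
Proof.
move=> [l /counit_rep_teq ->]; rewrite -/(star_ideal_comb _ _ _).
elim: l => [|z l IH]; first by rewrite /counit_rep tsum_nil.
rewrite star_ideal_comb_cons counit_rep_cat IH !counit_rep_tmul.
by rewrite counit_rep_star_gen mulr0 mul0r addr0.
Qed.
Lemma counit_rep_equiv s t : star_equiv f g s t -> counit_rep s = counit_rep t.
Proof.
move/counit_rep_star_ideal; rewrite counit_rep_cat counit_rep_tscale mulN1r.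
by move/eqP; rewrite subr_eq0 => /eqP.
Qed.

Lemma star_mulA : associative star_mul.
Proof.
move=> x y z; elim/quotW: x => s; elim/quotW: y => t; elim/quotW: z => u.
by rewrite !star_mulE; apply: pi_teq; apply: tmulA.
Qed.
Lemma star_mul1 : left_id (pi (tone B C)) star_mul.
Proof. by move=> x; elim/quotW: x => s; rewrite star_mulE; apply: pi_teq; apply: tmul1l. Qed.
Lemma star_mulr1 : right_id (pi (tone B C)) star_mul.
Proof. by move=> x; elim/quotW: x => s; rewrite star_mulE; apply: pi_teq; apply: tmul1r. Qed.
Lemma star_mulDl : left_distributive star_mul +%R.
Proof.
move=> x y z; elim/quotW: x => s; elim/quotW: y => t; elim/quotW: z => u.
by rewrite add_pi !star_mulE add_pi; apply: pi_teq; apply: tmul_catl.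
Qed.
Lemma star_mulDr : right_distributive star_mul +%R.
Proof.
move=> x y z; elim/quotW: x => s; elim/quotW: y => t; elim/quotW: z => u.
by rewrite add_pi !star_mulE add_pi; apply: pi_teq; apply: tmul_catr.
Qed.
(* The counit vanishes on the ideal but not on 1. *)
Lemma star_one_neq0 : pi (tone B C) != 0.
Proof.
apply/eqP => /equiv_pi /counit_rep_equiv.
by rewrite counit_rep_pure !counit1 mulr1 /counit_rep tsum_nil; apply/eqP; rewrite oner_eq0.
Qed.
HB.instance Definition _ := GRing.Zmodule_isNzRing.Build star_product
  star_mulA star_mul1 star_mulr1 star_mulDl star_mulDr star_one_neq0.

Lemma mul_pi s t : pi s * pi t = pi (tmul s t).
Proof. exact: star_mulE. Qed.

Lemma star_scaleAl a (x y : star_product) : a *: (x * y) = (a *: x) * y.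
Proof.
elim/quotW: x => s; elim/quotW: y => t.
by rewrite mul_pi !scale_pi mul_pi; apply: pi_teq; apply: teq_sym; apply: tmul_tscalel.
Qed.
HB.instance Definition _ := GRing.Lmodule_isLalgebra.Build R star_product star_scaleAl.
Lemma star_scaleAr a (x y : star_product) : a *: (x * y) = x * (a *: y).
Proof.
elim/quotW: x => s; elim/quotW: y => t.
by rewrite mul_pi !scale_pi mul_pi; apply: pi_teq; apply: teq_sym; apply: tmul_tscaler.
Qed.
HB.instance Definition _ := GRing.Lalgebra_isAlgebra.Build R star_product star_scaleAr.

Lemma zero_pi : 0 = pi [::] :> star_product. Proof. by []. Qed.

Definition pure (b : B) (c : C) : star_product := pi [:: (b, c)].

Lemma pi_pure s : pi s = \sum_(x <- s) pure x.1 x.2.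
Proof.
elim: s => [|[b c] s IH]; first by rewrite big_nil.
by rewrite big_cons -IH /pure add_pi.
Qed.
Lemma pureDZl a b b' c : pure (a *: b + b') c = a *: pure b c + pure b' c.
Proof.
rewrite /pure scale_pi add_pi; apply: pi_teq; apply/teq_tsumP => P phi hphi.
by rewrite tsum_cat tsum_tscale // !tsum_cons !tsum_nil !addr0 /= bilinDl // bilinZl.
Qed.
Lemma pureDZr a b c c' : pure b (a *: c + c') = a *: pure b c + pure b c'.
Proof.
rewrite /pure scale_pi add_pi; apply: pi_teq; apply/teq_tsumP => P phi hphi.
by rewrite tsum_cat tsum_tscale // !tsum_cons !tsum_nil !addr0 /= bilinDr // bilinZr.
Qed.
Lemma pure_linearl c : linear_map (pure^~ c).
Proof. by move=> a b b'; rewrite pureDZl. Qed.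
Lemma pure_linearr b : linear_map (pure b).
Proof. by move=> a c c'; rewrite pureDZr. Qed.
Lemma pureM b c b' c' : pure b c * pure b' c' = pure (b * b') (c * c').
Proof. by rewrite /pure mul_pi. Qed.
Lemma pure11 : pure 1 1 = 1.
Proof. by []. Qed.

Definition star_inl (b : B) : star_product := pure b 1.
Definition star_inr (c : C) : star_product := pure 1 c.

Lemma star_product_is_star_product : is_star_product f g star_inl star_inr.
Proof.
have pi_inl_inr s : \sum_(x <- s) star_inl x.1 * star_inr x.2 = pi s.
  by rewrite pi_pure; apply: eq_bigr => x _; rewrite pureM mulr1 mul1r.
split.
- by move=> b c; rewrite !pureM !mulr1 !mul1r.
- by move=> x; exists (repr x); rewrite pi_inl_inr reprK.
- move=> s; rewrite pi_inl_inr zero_pi; split.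
    by move/equiv_pi; rewrite /star_equiv /tscale cats0.
  by move=> Is; apply: pi_equiv; rewrite /star_equiv /tscale cats0.
Qed.

Definition comul_rep s : tensor star_product star_product :=
  flatten [seq [seq (pure z.1 w.1, pure z.2 w.2) | z <- comul p.1, w <- comul p.2] | p <- s].

(* Delta (b (x) c) = sum (b1 (x) c1) (x) (b2 (x) c2), the coproduct of B (x) C. *)
Definition comul_eval (M : lmodType R) (phi : star_product -> star_product -> M)
    (b : B) (c : C) : M :=
  tsum (fun z1 z2 => tsum (fun w1 w2 => phi (pure z1 w1) (pure z2 w2)) (comul c)) (comul b).

Lemma tsum_comul_rep (M : lmodType R) (phi : star_product -> star_product -> M) s :
  tsum phi (comul_rep s) = tsum (comul_eval phi) s.
Proof.
rewrite /tsum /comul_rep big_flatten /= big_map; apply: eq_bigr => p _.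
by rewrite big_allpairs_dep.
Qed.
Lemma comul_rep_cat s t : comul_rep (s ++ t) = comul_rep s ++ comul_rep t.
Proof. by rewrite /comul_rep map_cat flatten_cat. Qed.

Section ComulEvalBilinear.
Variables (M : lmodType R) (phi : star_product -> star_product -> M).
Hypothesis hphi : bilinear_map phi.

Lemma bilinear_pure_r z1 z2 : bilinear_map (fun w1 w2 => phi (pure z1 w1) (pure z2 w2)).
Proof. by split=> a m m' n; rewrite pureDZr ?(bilinE hphi). Qed.
Lemma bilinear_pure_l w1 w2 : bilinear_map (fun z1 z2 => phi (pure z1 w1) (pure z2 w2)).
Proof. by split=> a m m' n; rewrite pureDZl ?(bilinE hphi). Qed.
Lemma bilinear_comul_eval_l c :
  bilinear_map (fun z1 z2 => tsum (fun w1 w2 => phi (pure z1 w1) (pure z2 w2)) (comul c)).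
Proof.
by split=> a m m' n; apply: tsum_linear => w1 w2;
  rewrite pureDZl ?(bilinE hphi).
Qed.
Lemma bilinear_comul_eval : bilinear_map (comul_eval phi).
Proof.
split=> a m m' n; rewrite /comul_eval.
  by rewrite comul_linear //; apply: bilinear_comul_eval_l.
by apply: tsum_linear => z1 z2; rewrite comul_linear //; apply: bilinear_pure_r.
Qed.

Lemma comul_evalM b c b' c' :
  comul_eval phi (b * b') (c * c') =
  comul_eval (fun X Y => comul_eval (fun X' Y' => phi (X * X') (Y * Y')) b' c') b c.
Proof.
rewrite /comul_eval comulM; last exact: bilinear_comul_eval_l.
apply: eq_tsum => z1 z2.
transitivity (tsum (fun z1' z2' => tsum (fun w1 w2 => tsum (fun w1' w2' =>
    phi (pure (z1 * z1') (w1 * w1')) (pure (z2 * z2') (w2 * w2'))) (comul c'))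
    (comul c)) (comul b')).
  by apply: eq_tsum => z1' z2'; rewrite comulM //; apply: bilinear_pure_r.
rewrite [LHS]exchange_tsum; apply: eq_tsum => w1 w2; apply: eq_tsum => z1' z2'.
by apply: eq_tsum => w1' w2'; rewrite !pureM.
Qed.

End ComulEvalBilinear.

Lemma comul_eval_tsum (M : lmodType R) (K : star_product -> star_product -> B -> C -> M)
    b c s :
  comul_eval (fun X Y => tsum (K X Y) s) b c =
  tsum (fun p q => comul_eval (fun X Y => K X Y p q) b c) s.
Proof.
rewrite /comul_eval [RHS]exchange_tsum; apply: eq_tsum => z1 z2.
by rewrite [RHS]exchange_tsum.
Qed.

Lemma comul_rep_teq s t : teq s t -> teq (comul_rep s) (comul_rep t).
Proof.
move=> /teq_tsumP est; apply/teq_tsumP => P phi hphi.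
by rewrite !tsum_comul_rep est //; apply: bilinear_comul_eval.
Qed.
Lemma comul_rep_tscale a s : teq (comul_rep (tscale a s)) (tscale a (comul_rep s)).
Proof.
apply/teq_tsumP => P phi hphi.
by rewrite tsum_comul_rep !tsum_tscale ?tsum_comul_rep //; apply: bilinear_comul_eval.
Qed.
Lemma comul_rep_tmul s t : teq (comul_rep (tmul s t)) (tmul (comul_rep s) (comul_rep t)).
Proof.
apply/teq_tsumP => P phi hphi; rewrite tsum_comul_rep !tsum_tmul tsum_comul_rep.
apply: eq_tsum => b c; symmetry.
transitivity (comul_eval (fun X Y =>
    tsum (comul_eval (fun X' Y' => phi (X * X') (Y * Y'))) t) b c).
  by apply: eq_tsum => z1 z2; apply: eq_tsum => w1 w2; rewrite tsum_comul_rep.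
by rewrite comul_eval_tsum; apply: eq_tsum => b' c'; rewrite comul_evalM.
Qed.

Lemma pure_star_gen a : pure (f a) 1 = pure 1 (g a).
Proof.
apply: pi_equiv; exists [:: (tone B C, a, tone B C)]; apply/teq_tsumP => P phi hphi.
rewrite tsum_cat tsum_tscale // -/(star_ideal_comb _ _ _) star_ideal_comb_cons cats0.
rewrite !tsum_tmul /= /tsum !big_cons !big_nil /= !addr0.
by rewrite !mul1r !mulr1 bilinNl // scaleN1r.
Qed.

Lemma comul_rep_star_gen a : teq (comul_rep (star_gen f g a)) [::].
Proof.
apply/teq_tsumP => P phi hphi.
rewrite tsum_comul_rep tsum_nil !tsum_cons tsum_nil addr0 /= bilinNl;
  last exact: bilinear_comul_eval.
rewrite /comul_eval (comul1 (bilinear_comul_eval_l hphi _)).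
under eq_tsum => z1 z2 do rewrite (comul1 (bilinear_pure_r hphi z1 z2)).
rewrite (comul_morph hf _ (bilinear_pure_l hphi 1 1)).
rewrite (comul_morph hg _ (bilinear_pure_r hphi 1 1)).
by apply/eqP; rewrite subr_eq0; apply/eqP; apply: eq_tsum => a1 a2; rewrite !pure_star_gen.
Qed.

Lemma comul_rep_star_ideal s : I s -> teq (comul_rep s) [::].
Proof.
move=> [l /comul_rep_teq e]; apply: teq_trans e _; rewrite -/(star_ideal_comb _ _ _).
elim: l => [|z l IH] //; rewrite star_ideal_comb_cons comul_rep_cat.
apply: teq_trans (teq_cat _ IH) _; last by rewrite cats0.
apply: teq_trans (comul_rep_tmul _ _) _.
apply: teq_trans (teq_tmul (comul_rep_tmul _ _) (teq_refl _)) _.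
apply: teq_trans (teq_tmul (teq_tmul (teq_refl _) (comul_rep_star_gen _)) (teq_refl _)) _.
exact: teq_tmul (tmul_nilr _) (teq_refl _).
Qed.

Lemma comul_rep_equiv s t : star_equiv f g s t -> teq (comul_rep s) (comul_rep t).
Proof.
move=> /comul_rep_star_ideal /teq_tsumP e; apply/teq_tsumP => P phi hphi.
have /teq_tsumP es := comul_rep_tscale (-1) t.
move: (e P phi hphi); rewrite comul_rep_cat tsum_cat tsum_nil es // tsum_tscale // scaleN1r.
by move/eqP; rewrite subr_eq0 => /eqP.
Qed.

Definition antipode_rep s : T := tmap (@antipode R B) (@antipode R C) s.

Lemma antipode_rep_cat s t : antipode_rep (s ++ t) = antipode_rep s ++ antipode_rep t.
Proof. by rewrite /antipode_rep /tmap map_cat. Qed.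
Lemma antipode_rep_tscale a s : antipode_rep (tscale a s) = tscale a (antipode_rep s).
Proof. by elim: s => [|x s IH] //=; rewrite antipodeZ IH. Qed.
Lemma antipode_rep_teq s t : teq s t -> teq (antipode_rep s) (antipode_rep t).
Proof.
move=> /teq_tsumP est; apply/teq_tsumP => P phi hphi; rewrite !tsum_tmap; apply: est.
by split=> a m m' n; rewrite antipodeD antipodeZ
  ?(bilinE hphi).
Qed.
Lemma antipode_rep_tmul s t :
  teq (antipode_rep (tmul s t)) (tmul (antipode_rep t) (antipode_rep s)).
Proof.
apply/teq_tsumP => P phi _; rewrite tsum_tmap !tsum_tmul !tsum_tmap.
rewrite [LHS]exchange_tsum; apply: eq_tsum => b c; rewrite tsum_tmap.
by apply: eq_tsum => b' c'; rewrite !antipodeM.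
Qed.
Lemma antipode_rep_star_gen a : antipode_rep (star_gen f g a) = star_gen f g (antipode a).
Proof.
by rewrite /antipode_rep /star_gen /tmap /= !antipode1 !antipodeN1
  (morph_antipode hf) (morph_antipode hg).
Qed.
Lemma antipode_rep_star_ideal s : I s -> I (antipode_rep s).
Proof.
move=> [l /antipode_rep_teq e].
exists [seq (antipode_rep z.2, antipode z.1.2, antipode_rep z.1.1) | z <- l].
apply: teq_trans e _; rewrite -!/(star_ideal_comb _ _ _).
elim: l => [|z l IH] //; rewrite !star_ideal_comb_cons antipode_rep_cat.
apply: teq_cat => //=; apply: teq_trans (antipode_rep_tmul _ _) _.
apply: teq_trans (teq_tmul (teq_refl _) (antipode_rep_tmul _ _)) _.
by rewrite antipode_rep_star_gen; apply: tmulA.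
Qed.
Lemma antipode_rep_equiv s t :
  star_equiv f g s t -> star_equiv f g (antipode_rep s) (antipode_rep t).
Proof.
by move=> /antipode_rep_star_ideal; rewrite /star_equiv antipode_rep_cat antipode_rep_tscale.
Qed.

Definition star_comul (x : star_product) := comul_rep (repr x).
Definition star_counit (x : star_product) := counit_rep (repr x).
Definition star_antipode (x : star_product) := pi (antipode_rep (repr x)).

Lemma star_comul_pi s : teq (star_comul (pi s)) (comul_rep s).
Proof. exact/comul_rep_equiv/repr_equiv. Qed.
Lemma star_counit_pi s : star_counit (pi s) = counit_rep s.
Proof. exact/counit_rep_equiv/repr_equiv. Qed.
Lemma star_antipode_pi s : star_antipode (pi s) = pi (antipode_rep s).
Proof. exact/pi_equiv/antipode_rep_equiv/repr_equiv. Qed.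

Lemma tsum_star_comul (M : lmodType R) (phi : star_product -> star_product -> M) s :
  bilinear_map phi -> tsum phi (star_comul (pi s)) = tsum (comul_eval phi) s.
Proof. by move=> hphi; rewrite -tsum_comul_rep; apply: (star_comul_pi s). Qed.
Lemma tsum_star_comul_pure (M : lmodType R) (phi : star_product -> star_product -> M) b c :
  bilinear_map phi -> tsum phi (star_comul (pure b c)) = comul_eval phi b c.
Proof. by move=> hphi; rewrite tsum_star_comul // tsum_cons tsum_nil addr0. Qed.
Lemma star_counit_pure b c : star_counit (pure b c) = counit b * counit c.
Proof. by rewrite star_counit_pi counit_rep_pure. Qed.
Lemma star_antipode_pure b c : star_antipode (pure b c) = pure (antipode b) (antipode c).
Proof. by rewrite star_antipode_pi. Qed.

Lemma star_comul_linear a x y :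
  teq (star_comul (a *: x + y)) (tscale a (star_comul x) ++ star_comul y).
Proof.
elim/quotW: x => s; elim/quotW: y => t; rewrite scale_pi add_pi.
apply: teq_trans (star_comul_pi _) _; rewrite comul_rep_cat; apply: teq_cat.
  exact: teq_trans (comul_rep_tscale _ _) (teq_tscale _ (teq_sym (star_comul_pi _))).
exact: teq_sym (star_comul_pi _).
Qed.
Lemma tsum_star_comul_linear (M : lmodType R) (phi : star_product -> star_product -> M)
    a x y : bilinear_map phi ->
  tsum phi (star_comul (a *: x + y)) =
  a *: tsum phi (star_comul x) + tsum phi (star_comul y).
Proof.
move=> hphi; rewrite -tsum_tscale // -tsum_cat.
by have /teq_tsumP -> := star_comul_linear a x y.
Qed.

Lemma star_comulM x y : teq (star_comul (x * y)) (tmul (star_comul x) (star_comul y)).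
Proof.
elim/quotW: x => s; elim/quotW: y => t; rewrite mul_pi.
apply: teq_trans (star_comul_pi _) _; apply: teq_trans (comul_rep_tmul _ _) _.
by apply: teq_tmul; apply: teq_sym; apply: star_comul_pi.
Qed.
Lemma star_comul1 : teq (star_comul 1) (tone star_product star_product).
Proof.
apply/teq_tsumP => P phi hphi; rewrite -pure11 tsum_star_comul_pure //.
rewrite /comul_eval (comul1 (bilinear_comul_eval_l hphi 1)).
by rewrite (comul1 (bilinear_pure_r hphi 1 1)) pure11 tsum_cons tsum_nil addr0.
Qed.

Section Coassociativity.
Variables (M : lmodType R) (phi : star_product -> star_product -> star_product -> M).
Hypothesis hphi : trilinear_map phi.

Lemma comul_eval_coassoc b c :
  comul_eval (fun X Y => tsum (fun X1 X2 => phi X1 X2 Y) (star_comul X)) b c =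
  comul_eval (fun X Y => tsum (fun Y1 Y2 => phi X Y1 Y2) (star_comul Y)) b c.
Proof.
rewrite /comul_eval; case: (hphi) => h1 h2 h3.
transitivity (tsum (fun z1 z2 => tsum (fun w1 w2 => tsum (fun z11 z12 =>
    tsum (fun w11 w12 => phi (pure z11 w11) (pure z12 w12) (pure z2 w2)) (comul w1))
    (comul z1)) (comul c)) (comul b)).
  apply: eq_tsum => z1 z2; apply: eq_tsum => w1 w2.
  by rewrite tsum_star_comul_pure //; apply: trilinear_map12.
transitivity (tsum (fun z1 z2 => tsum (fun w1 w2 => tsum (fun z21 z22 =>
    tsum (fun w21 w22 => phi (pure z1 w1) (pure z21 w21) (pure z22 w22)) (comul w2))
    (comul z2)) (comul c)) (comul b)); last first.
  apply: eq_tsum => z1 z2; apply: eq_tsum => w1 w2.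
  by rewrite tsum_star_comul_pure //; apply: trilinear_map23.
transitivity (tsum (fun z1 z2 => tsum (fun z11 z12 => tsum (fun w1 w2 =>
    tsum (fun w11 w12 => phi (pure z11 w11) (pure z12 w12) (pure z2 w2)) (comul w1))
    (comul c)) (comul z1)) (comul b)).
  by apply: eq_tsum => z1 z2; rewrite [LHS]exchange_tsum.
transitivity (tsum (fun z1 z2 => tsum (fun z21 z22 => tsum (fun w1 w2 =>
    tsum (fun w21 w22 => phi (pure z1 w1) (pure z21 w21) (pure z22 w22)) (comul w2))
    (comul c)) (comul z2)) (comul b)); last first.
  by apply: eq_tsum => z1 z2; rewrite [LHS]exchange_tsum.
rewrite (comul_coassoc (F := fun z11 z12 z2 => tsum (fun w1 w2 => tsum (fun w11 w12 =>
  phi (pure z11 w11) (pure z12 w12) (pure z2 w2)) (comul w1)) (comul c)));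
  last by split=> *; do 2 (apply: tsum_linear => ? ?); rewrite pureDZl ?h1 ?h2 ?h3.
apply: eq_tsum => z1 z2; apply: eq_tsum => z21 z22.
rewrite (comul_coassoc (F := fun w11 w12 w2 =>
  phi (pure z1 w11) (pure z21 w12) (pure z22 w2))) //.
by split=> *; rewrite pureDZr ?h1 ?h2 ?h3.
Qed.

Lemma bilinear_star_comul_l :
  bilinear_map (fun X Y => tsum (fun X1 X2 => phi X1 X2 Y) (star_comul X)).
Proof.
case: (hphi) => _ _ h3; split=> a m m' n.
  by rewrite tsum_star_comul_linear //; apply: trilinear_map12.
by apply: tsum_linear => X1 X2; rewrite h3.
Qed.
Lemma bilinear_star_comul_r :
  bilinear_map (fun X Y => tsum (fun Y1 Y2 => phi X Y1 Y2) (star_comul Y)).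
Proof.
case: (hphi) => h1 _ _; split=> a m m' n.
  by apply: tsum_linear => Y1 Y2; rewrite h1.
by rewrite tsum_star_comul_linear //; apply: trilinear_map23.
Qed.

End Coassociativity.

Lemma star_comul_coassoc x :
  teq3 (tcomul_l star_comul (star_comul x)) (tcomul_r star_comul (star_comul x)).
Proof.
elim/quotW: x => s P phi hphi; rewrite sum_tcomul_l sum_tcomul_r.
rewrite [LHS]tsum_star_comul; last exact: bilinear_star_comul_l.
rewrite [RHS]tsum_star_comul; last exact: bilinear_star_comul_r.
by apply: eq_tsum => b c; apply: comul_eval_coassoc.
Qed.

Lemma star_counit_linear : linear_map (star_counit : star_product -> R^o).
Proof.
move=> a x y; elim/quotW: x => s; elim/quotW: y => t.
by rewrite scale_pi add_pi !star_counit_pi counit_rep_cat counit_rep_tscale.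
Qed.
Lemma star_counitM x y : star_counit (x * y) = star_counit x * star_counit y.
Proof.
by elim/quotW: x => s; elim/quotW: y => t; rewrite mul_pi !star_counit_pi counit_rep_tmul.
Qed.
Lemma star_counit1 : star_counit 1 = 1.
Proof. by rewrite -pure11 star_counit_pure !counit1 mulr1. Qed.

Lemma star_antipode_linear : linear_map star_antipode.
Proof.
move=> a x y; elim/quotW: x => s; elim/quotW: y => t.
rewrite scale_pi add_pi !star_antipode_pi antipode_rep_cat antipode_rep_tscale.
by rewrite scale_pi add_pi.
Qed.

Lemma tsum_star_comul_pure_ind (M : lmodType R) (phi : star_product -> star_product -> M)
    (G : star_product -> M) x :
  linear_map G -> (forall b c, comul_eval phi b c = G (pure b c)) ->
  tsum phi (star_comul x) = G x.
Proof.
move=> hG ephi; rewrite /star_comul tsum_comul_rep -[in RHS](reprK x) pi_pure.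
by rewrite (linear_map_sum hG); apply: eq_bigr => p _; apply: ephi.
Qed.

Lemma star_counit_l x : tsum (fun X Y => star_counit X *: Y) (star_comul x) = x.
Proof.
apply: tsum_star_comul_pure_ind => [// | b c].
transitivity (tsum (fun z1 z2 => counit z1 *: pure z2 c) (comul b));
  last exact: counit_l_map (pure_linearl c) b.
apply: eq_tsum => z1 z2; rewrite -(counit_l_map (pure_linearr z2) c) scaler_tsum.
by apply: eq_tsum => w1 w2; rewrite star_counit_pure scalerA.
Qed.
Lemma star_counit_r x : tsum (fun X Y => star_counit Y *: X) (star_comul x) = x.
Proof.
apply: tsum_star_comul_pure_ind => [// | b c].
transitivity (tsum (fun z1 z2 => counit z2 *: pure z1 c) (comul b));
  last exact: counit_r_map (pure_linearl c) b.
apply: eq_tsum => z1 z2; rewrite -(counit_r_map (pure_linearr z1) c) scaler_tsum.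
by apply: eq_tsum => w1 w2; rewrite star_counit_pure scalerA.
Qed.

Lemma pure_alg (a c : R) : pure a%:A c%:A = (a * c)%:A.
Proof.
by rewrite (linear_mapZ (pure_linearl _)) (linear_mapZ (pure_linearr _)) pure11 scalerA.
Qed.
Lemma pure_tsum (phi : B -> B -> B) (psi : C -> C -> C) b c :
  pure (tsum phi (comul b)) (tsum psi (comul c)) =
  tsum (fun z1 z2 => tsum (fun w1 w2 => pure (phi z1 z2) (psi w1 w2)) (comul c)) (comul b).
Proof.
rewrite /tsum (linear_map_sum (pure_linearl _)); apply: eq_bigr => z _.
exact: (linear_map_sum (pure_linearr _)).
Qed.

Lemma star_counit_alg_linear : linear_map (fun x => (star_counit x)%:A : star_product).
Proof.
move=> a x y; rewrite (star_counit_linear a x y) /=.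
by rewrite scalerDl -scalerA.
Qed.

Lemma star_antipode_l x :
  tsum (fun X Y => star_antipode X * Y) (star_comul x) = (star_counit x)%:A.
Proof.
apply: (tsum_star_comul_pure_ind _ star_counit_alg_linear) => b c.
rewrite star_counit_pure -pure_alg -!antipode_l pure_tsum.
by apply: eq_tsum => z1 z2; apply: eq_tsum => w1 w2; rewrite star_antipode_pure pureM.
Qed.
Lemma star_antipode_r x :
  tsum (fun X Y => X * star_antipode Y) (star_comul x) = (star_counit x)%:A.
Proof.
apply: (tsum_star_comul_pure_ind _ star_counit_alg_linear) => b c.
rewrite star_counit_pure -pure_alg -!antipode_r pure_tsum.
by apply: eq_tsum => z1 z2; apply: eq_tsum => w1 w2; rewrite star_antipode_pure pureM.
Qed.

Lemma star_hopf_axioms : hopf_axioms star_comul star_counit star_antipode.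
Proof.
split; split.
- exact: star_comul_linear.
- exact: star_comul_coassoc.
- exact: star_comulM.
- exact: star_comul1.
- exact: star_counit_linear.
- exact: star_counitM.
- exact: star_counit1.
- exact: star_counit_l.
- exact: star_counit_r.
- exact: star_antipode_linear.
- exact: star_antipode_l.
- exact: star_antipode_r.
Qed.

Definition star_hopfAlg : hopfAlgType R := HopfAlg star_hopf_axioms.

Lemma star_inl_morphism : hopf_morphism (star_inl : B -> star_hopfAlg).
Proof.
split=> [a x y | x y | | x | x] /=.
- by rewrite /star_inl pureDZl.
- by rewrite /star_inl pureM mulr1.
- exact: pure11.
- apply/teq_tsumP => P phi hphi; rewrite tsum_star_comul_pure // tsum_tmap.
  by apply: eq_tsum => z1 z2; rewrite comul1 //; apply: bilinear_pure_r.
- by rewrite star_counit_pure counit1 mulr1.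
Qed.
Lemma star_inr_morphism : hopf_morphism (star_inr : C -> star_hopfAlg).
Proof.
split=> [a x y | x y | | x | x] /=.
- by rewrite /star_inr pureDZr.
- by rewrite /star_inr pureM mulr1.
- exact: pure11.
- apply/teq_tsumP => P phi hphi; rewrite tsum_star_comul_pure // tsum_tmap.
  by rewrite /comul_eval comul1 //; apply: bilinear_comul_eval_l.
- by rewrite star_counit_pure counit1 mul1r.
Qed.

End StarProduct.

Theorem lemma3p11 (R : idomainType) (HR : is_field R \/ dedekind_ring R)
  (A B C : hopfAlgType R) (f : A -> B) (g : A -> C)
  (hf : hopf_morphism f) (hg : hopf_morphism g) :
  exists (P : hopfAlgType R) (iB : B -> P) (iC : C -> P),
    [/\ is_star_product f g iB iC, hopf_morphism iB & hopf_morphism iC].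
Proof.
exists (star_hopfAlg hf hg), (star_inl f g), (star_inr f g).
split.
- exact: star_product_is_star_product.
- exact: star_inl_morphism.
- exact: star_inr_morphism.
Qed.
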